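(* Let $m$ be the normalized Lebesgue measure on $[-\pi,\pi]^N$ and for $(\theta_i^0)\in[-\pi,\pi]^N$ let $R_0=\frac1N\sum_{j=1}^N(1+\cos\theta_j^0)$. For every $t\in(0,1)$, \[ m\{(\theta_i^0)\in[-\pi,\pi]^N: R_0\le t\}\le\min\left\{\exp\big(-(1-t)^2N\big),\ \Big(\frac{\sqrt{\pi et}}{2}\Big)^N\right\}. \] *)

From HB Require Import structures.
From mathcomp Require Import all_boot all_order all_algebra.
From mathcomp Require Import all_classical all_reals all_analysis.
Set Implicit Arguments. Unset Strict Implicit. Unset Printing Implicit Defensive.
Import Order.TTheory GRing.Theory Num.Theory.
Import numFieldNormedType.Exports.
Local Open Scope classical_set_scope.
Local Open Scope ring_scope.
Local Open Scope ereal_scope.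

Fixpoint iter_cube_int (R : realType) (n : nat) : (n.-tuple R -> \bar R) -> \bar R :=
  match n return (n.-tuple R -> \bar R) -> \bar R with
  | 0 => fun f => f [tuple]
  | n'.+1 => fun f =>
      \int[@lebesgue_measure R]_(x in `[(- pi)%R, pi]%classic)
        @iter_cube_int R n' (fun t : n'.-tuple R => f (cons_tuple (x : R) t))
  end.

(* Normalized Lebesgue measure m on [-pi,pi]^N (the N-fold product of the
   uniform probability on [-pi,pi]), evaluated on a set A of N-tuples:
   m(A) = (2 pi)^{-N} * Leb_N(A /\ [-pi,pi]^N), computed by Tonelli as an
   iterated integral of the indicator of A. *)
Definition cube_measure (R : realType) (N : nat) (A : set (N.-tuple R)) : \bar R :=
  (((2 * pi) ^- N)%R)%:E * @iter_cube_int R N (fun t => (\1_A t)%:E).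

Definition order_R0 (R : realType) (N : nat) (th : N.-tuple R) : R :=
  (N%:R)^-1 * \sum_(j < N) (1 + cos (tnth th j)).

From HB Require Import structures.
From mathcomp Require Import all_boot all_order all_algebra.
From mathcomp Require Import all_classical all_reals all_analysis.
From mathcomp Require Import ring lra measurable_realfun.
Import Order.TTheory GRing.Theory Num.Theory.
Import numFieldNormedType.Exports.
Local Open Scope classical_set_scope.
Local Open Scope ring_scope.

(* Chernoff's method: for lam >= 0 the indicator of {R_0 <= t} is bounded by
   exp(lam N t) prod_j exp(- lam (1 + cos theta_j)), so by Tonelli
   m{R_0 <= t} <= (exp(lam t) / (2 pi) * int_{-pi}^{pi} exp(- lam (1 + cos x)) dx)^N.
   For lam = 2 (1 - t), integrating a fourth-order Taylor bound of exp gives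
   int exp(y cos x) dx <= 2 pi exp(y^2 / 4), hence the bound exp(-(1 - t)^2 N).
   For lam = 1 / (2 t), Jordan's inequality gives 1 + cos x >= 2 (pi - |x|)^2 / pi^2,
   so the integrand is dominated by two half-Gaussians of total mass pi sqrt(pi t),
   hence the bound (sqrt(pi e t) / 2)^N. *)

(* The library rules are stated for pointwise operations on functions ([f + g],
   [f \o g], ...), which do not unify with lambda terms: each rule is preceded by
   a [change] to that form. *)
Ltac derive_tac := lazymatch goal with
| |- is_derive _ _ (fun _ => ?c) _ => apply: is_derive_cst
| |- is_derive _ _ (fun y => y) _ => apply: is_derive_id
| |- is_derive ?x ?v (fun y => @?A y + @?B y) ?d =>
    change (is_derive x v (A + B) d); eapply is_deriveD; derive_tac
| |- is_derive ?x ?v (fun y => @?A y - @?B y) ?d =>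
    change (is_derive x v (A - B) d); eapply is_deriveB; derive_tac
| |- is_derive ?x ?v (fun y => @?A y * @?B y) ?d =>
    change (is_derive x v (A * B) d); eapply is_deriveM; derive_tac
| |- is_derive ?x ?v (fun y => - @?A y) ?d =>
    change (is_derive x v (- A) d); eapply is_deriveN; derive_tac
| |- is_derive ?x ?v (fun y => @?A y ^+ ?n) ?d =>
    change (is_derive x v (A ^+ n) d); eapply is_deriveX; derive_tac
| |- is_derive ?x ?v (fun y => ?F (@?A y)) ?d =>
    change (is_derive x v (F \o A) d); eapply is_derive1_comp;
    [exact: _ | derive_tac]
| |- is_derive _ _ ?f _ => progress unfold f; derive_tac
end.

Ltac derive_eq := eapply is_derive_eq; [derive_tac | rewrite /GRing.scale /=].

Section derivative_sign.
Context {R : realType}.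
Implicit Types (f df : R -> R) (a b x d : R).

Lemma is_derive_continuous f x d : is_derive x 1 f d -> {for x, continuous f}.
Proof. by case=> /derivable1_diffP /differentiable_continuous. Qed.

Lemma is_derive_LRcontinuous f df a b :
  (forall x, is_derive x 1 f (df x)) -> derivable_oo_LRcontinuous f a b.
Proof.
move=> fdf; split.
- by move=> x _; case: (fdf x).
- by apply: cvg_at_right_filter; exact: is_derive_continuous (fdf _).
- by apply: cvg_at_left_filter; exact: is_derive_continuous (fdf _).
Qed.

Lemma ger0_is_derive_le f df a b : a <= b ->
  {in `[a, b], forall x, is_derive x 1 f (df x)} ->
  {in `[a, b], forall x, 0 <= df x} -> f a <= f b.
Proof.
move=> ab fdf df_ge0; rewrite -subr_ge0.
have [c cab ->] : exists2 c, c \in `[a, b] & f b - f a = df c * (b - a).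
  apply: MVT_segment => // [x|].
    by rewrite in_itv /= => /andP[ax xb]; apply: fdf; rewrite in_itv /= !ltW.
  apply: continuous_in_subspaceT => x; rewrite inE /= => xab.
  exact: is_derive_continuous (fdf x xab).
by rewrite mulr_ge0 ?df_ge0 ?subr_ge0.
Qed.

Lemma ler0_is_derive_ge f df a b : a <= b ->
  {in `[a, b], forall x, is_derive x 1 f (df x)} ->
  {in `[a, b], forall x, df x <= 0} -> f b <= f a.
Proof.
move=> ab fdf df_le0; rewrite -lerN2.
apply: (@ger0_is_derive_le (fun y => - f y) (fun y => - df y)) => // x xab.
  exact: is_deriveN (fdf x xab).
by rewrite oppr_ge0 df_le0.
Qed.

End derivative_sign.

Section elementary_inequalities.
Context {R : realType}.

Lemma expR_le_taylor4 (y : R) : -2 <= y <= 2 ->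
  expR y <= 1 + y + y ^+ 2 / 2 + y ^+ 3 / 6 + y ^+ 4 / 12.
Proof.
move=> /andP[y_ge y_le].
pose F (w : R) := expR (- w) * (1 + w + w ^+ 2 / 2 + w ^+ 3 / 6 + w ^+ 4 / 12).
pose F' (w : R) := expR (- w) * (w ^+ 3 * (2 - w) / 12).
have dF (w : R) : is_derive w 1 F (F' w) by derive_eq; rewrite /F'; field.
have F0 : F 0 = 1 by rewrite /F oppr0 expR0; field.
rewrite -(ler_pM2l (expR_gt0 (- y))) -expRD addNr expR0 -[X in X <= _]F0 -/(F y).
have [y_ge0|y_lt0] := lerP 0 y.
- apply: (@ger0_is_derive_le _ F F') => // x; rewrite in_itv /= => /andP[x_ge0 x_le].
  by rewrite mulr_ge0 ?expR_ge0 ?divr_ge0 ?mulr_ge0 ?exprn_ge0 // subr_ge0 (le_trans x_le).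
- apply: (@ler0_is_derive_ge _ F F') => //; first exact: ltW.
  move=> x; rewrite in_itv /= => /andP[x_ge x_le0].
  rewrite mulr_ge0_le0 ?expR_ge0 // pmulr_lle0 ?invr_gt0 // mulr_le0_ge0 //; last lra.
  by rewrite exprS mulr_le0_ge0 // sqr_ge0.
Qed.

Lemma expR_ge_taylor2 (x : R) : 0 <= x -> 1 + x + x ^+ 2 / 2 <= expR x.
Proof.
move=> x_ge0.
pose F (w : R) := expR (- w) * (1 + w + w ^+ 2 / 2).
pose F' (w : R) := - (expR (- w) * (w ^+ 2 / 2)).
have dF (w : R) : is_derive w 1 F (F' w) by derive_eq; rewrite /F'; field.
have F0 : F 0 = 1 by rewrite /F oppr0 expR0; field.
rewrite -(ler_pM2l (expR_gt0 (- x))) -expRD addNr expR0 -[X in _ <= X]F0 -/(F x).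
apply: (@ler0_is_derive_ge _ F F') => // w _.
by rewrite oppr_le0 mulr_ge0 ?expR_ge0 ?divr_ge0 ?sqr_ge0.
Qed.

Lemma mul_cos_le_sin (u : R) : 0 <= u <= pi -> u * cos u <= sin u.
Proof.
move=> /andP[u_ge0 u_le]; rewrite -subr_le0.
pose G (w : R) := w * cos w - sin w.
have dG (w : R) : is_derive w 1 G (- (w * sin w)) by derive_eq; ring.
rewrite -[0](_ : G 0 = 0); last by rewrite /G sin0 mul0r subr0.
apply: (@ler0_is_derive_ge _ G (fun w => - (w * sin w))) => // w.
rewrite in_itv /= => /andP[w_ge0 w_le].
by rewrite oppr_le0 mulr_ge0 // sin_ge0_pi // w_ge0 (le_trans w_le).
Qed.

Lemma jordan_sin (v : R) : 0 <= v <= pi / 2 -> 2 / pi * v <= sin v.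
Proof.
move=> /andP[v_ge0 v_le]; have pi_gt0 := @pi_gt0 R.
have [->|v_neq0] := eqVneq v 0; first by rewrite sin0 mulr0.
have v_gt0 : 0 < v by rewrite lt_neqAle eq_sym v_neq0.
pose Q (w : R) := sin w * w^-1.
pose Q' (w : R) := (w * cos w - sin w) / w ^+ 2.
have dQ (w : R) : 0 < w -> is_derive w 1 Q (Q' w).
  move=> w_gt0; change (is_derive w 1 (sin * (fun y => y^-1)) (Q' w)).
  eapply is_derive_eq.
    exact: is_deriveM (is_derive_sin w) (is_deriveV (f := id) (lt0r_neq0 w_gt0) (is_derive_id w 1)).
  by rewrite /Q' /GRing.scale /=; field; rewrite gt_eqF.
have : Q (pi / 2) <= Q v.
  apply: (@ler0_is_derive_ge _ Q Q') => // w; rewrite in_itv /= => /andP[v_le_w w_le].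
    exact/dQ/(lt_le_trans v_gt0).
  rewrite /Q' mulr_le0_ge0 ?invr_ge0 ?sqr_ge0 // subr_le0 mul_cos_le_sin //.
  by rewrite (le_trans v_ge0) //= (le_trans w_le) // ler_pdivrMr //; lra.
by rewrite /Q sin_pihalf invf_div mul1r ler_pdivlMr.
Qed.

Lemma jordan_1Dcos (x : R) : 0 <= x <= pi -> 2 * (pi - x) ^+ 2 / pi ^+ 2 <= 1 + cos x.
Proof.
move=> /andP[x_ge0 x_le]; have pi_gt0 := @pi_gt0 R.
set w := pi - x.
have w_ge0 : 0 <= w by rewrite subr_ge0.
have -> : 1 + cos x = 2 * sin (w / 2) ^+ 2.
  have -> : cos x = - cos ((w / 2) *+ 2).
    by rewrite -mulr_natr divfK ?pnatr_eq0 // cosB cospi sinpi; ring.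
  rewrite cos_mulr2n cos2sin2; ring.
have jw0 : 0 <= 2 / pi * (w / 2) by rewrite mulr_ge0 ?divr_ge0 // ltW.
have jw1 : 2 / pi * (w / 2) <= sin (w / 2).
  apply: jordan_sin; rewrite divr_ge0 //=.
  by rewrite ler_pM2r ?invr_gt0 // /w lerBlDr lerDl.
have -> : 2 * w ^+ 2 / pi ^+ 2 = 2 * (2 / pi * (w / 2)) ^+ 2.
  (* [field] would look through the definition of [pi] as a natural multiple. *)
  by move: (lt0r_neq0 pi_gt0); move: (@pi R) => p p_neq0; field.
by rewrite ler_pM2l // ler_pXn2r // nnegrE (le_trans jw0).
Qed.

End elementary_inequalities.

Section ge0_le_integral_nm.
Local Open Scope ereal_scope.
Context d (T : measurableType d) (R : realType).
Variable mu : {measure set T -> \bar R}.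

(* Unlike [ge0_le_integral], no measurability is needed: the integral of a
   nonnegative function is a supremum over the simple functions below it. *)
Lemma ge0_le_integral_nm (D : set T) (f g : T -> \bar R) :
  (forall x, D x -> 0 <= f x) -> (forall x, D x -> f x <= g x) ->
  \int[mu]_(x in D) f x <= \int[mu]_(x in D) g x.
Proof.
move=> f_ge0 fg.
have g_ge0 x : D x -> 0 <= g x by move=> Dx; exact: le_trans (f_ge0 x Dx) (fg x Dx).
rewrite (ge0_integralE mu f_ge0) (ge0_integralE mu g_ge0).
apply: ereal_sup_le => _ [h hf <-]; exists h => //= x.
apply: le_trans (hf x) _; rewrite /patch; case: ifP => // /[!inE].
exact: fg.
Qed.

End ge0_le_integral_nm.

Section integrals_on_itv.
Context {R : realType}.
Notation mu := (@lebesgue_measure R).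

Lemma continuous_measurable_EFin (D : set R) (f : R -> R) :
  continuous f -> measurable_fun D (fun x => (f x)%:E).
Proof. by move=> cf; apply/measurable_EFinP; apply: measurable_funTS; exact: continuous_measurable_fun. Qed.

Lemma integral_expR_cos_le (y : R) : -2 <= y <= 2 ->
  (\int[mu]_(x in `[(- pi)%R, pi]) (expR (y * cos x))%:E
    <= (2 * pi * expR (y ^+ 2 / 4))%:E)%E.
Proof.
move=> y_bnd; have pi_gt0 := @pi_gt0 R.
pose P (x : R) := 1 + y * cos x + (y * cos x) ^+ 2 / 2 + (y * cos x) ^+ 3 / 6
  + (y * cos x) ^+ 4 / 12.
pose m := 1 + y ^+ 2 / 4 + y ^+ 4 / 32.
pose F (x : R) := m * x + sin x * (y + y ^+ 2 / 4 * cos x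
  + y ^+ 3 / 6 * (2 / 3 + cos x ^+ 2 / 3) + y ^+ 4 / 12 * (3 / 8 * cos x + cos x ^+ 3 / 4)).
have dF (x : R) : is_derive x 1 F (P x).
  by derive_eq; rewrite /P /m; field: (sin2cos2 x).
have cP : continuous P by move=> x; eapply is_derive_continuous; derive_tac.
have FTC : (\int[mu]_(x in `[(- pi)%R, pi]) (P x)%:E = (F pi)%:E - (F (- pi))%:E)%E.
  apply: continuous_FTC2; first by rewrite gtrN.
  - exact: continuous_subspaceT.
  - exact: is_derive_LRcontinuous dF.
  - by move=> x _; rewrite derive1E derive_val.
apply: (@le_trans _ _ (\int[mu]_(x in `[(- pi)%R, pi]) (P x)%:E)%E).
  apply: ge0_le_integral_nm => x _; first by rewrite lee_fin expR_ge0.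
  rewrite lee_fin expR_le_taylor4 //.
  by have := cos_geN1 x; have := cos_le1 x; nra.
rewrite FTC -EFinB lee_fin /F sinN sinpi oppr0 !mul0r !addr0.
rewrite (_ : m * pi - m * - pi = 2 * pi * m); last by ring.
apply: ler_wpM2l; first by rewrite mulr_ge0 // ltW.
rewrite (_ : y ^+ 2 / 4 = (y / 2) ^+ 2); last by field.
rewrite (_ : m = 1 + (y / 2) ^+ 2 + ((y / 2) ^+ 2) ^+ 2 / 2); last by rewrite /m; field.
by apply: expR_ge_taylor2; exact: sqr_ge0.
Qed.

Lemma integral_expR_Dcos_le (s : R) : 0 <= s <= 1 ->
  (\int[mu]_(x in `[(- pi)%R, pi]) (expR (- (2 * s) * (1 + cos x)))%:E
    <= (2 * pi * expR (s ^+ 2 - 2 * s))%:E)%E.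
Proof.
move=> s_bnd.
have mcos : measurable_fun `[(- pi)%R, pi] (fun x => (expR (- (2 * s) * cos x))%:E).
  apply: (continuous_measurable_EFin _ (fun x => expR (- (2 * s) * cos x))) => x.
  by eapply is_derive_continuous; derive_tac.
under eq_integral do rewrite mulrDr mulr1 expRD EFinM.
rewrite ge0_integralZl_EFin ?expR_ge0 //.
have -> : s ^+ 2 - 2 * s = - (2 * s) + (- (2 * s)) ^+ 2 / 4 by field.
rewrite expRD mulrCA EFinM; apply: lee_wpmul2l; first by rewrite lee_fin expR_ge0.
by apply: integral_expR_cos_le; lra.
Qed.

Lemma integral_gauss_shift_le (k a b : R) : 0 < k -> a <= b ->
  (\int[mu]_(x in `[a, b]) (gauss_fun (k * (x - a)))%:E
    <= (Num.sqrt pi / 2 / k)%:E)%E.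
Proof.
move=> k_gt0 ab; pose F (x : R) := k * (x - a).
have dF (x : R) : is_derive x 1 F k by derive_eq; ring.
have F' : F^`()%classic = cst k by apply/funext => x; rewrite derive1E derive_val.
have mgF : measurable_fun `[a, b] (fun x => (gauss_fun (F x))%:E).
  apply: (continuous_measurable_EFin _ (gauss_fun \o F)) => x.
  by apply: continuous_comp; [exact: is_derive_continuous (dF x) | exact: continuous_gauss_fun].
have gF_ge0 x : `[a, b]%classic x -> (0 <= (gauss_fun (F x))%:E)%E.
  by rewrite lee_fin gauss_fun_ge0.
have k_ge0 : (0 <= k%:E)%E by rewrite lee_fin ltW.
rewrite EFinM lee_pdivlMr // -ge0_integralZr //.
have -> : (\int[mu]_(x in `[a, b]) ((gauss_fun (F x))%:E * k%:E)
    = \int[mu]_(x in `[F a, F b]) (gauss_fun x)%:E)%E.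
  rewrite integration_by_substitution_increasing ?F' //.
  - by move=> x y _ _ xy; rewrite /F ltr_pM2l // ltrD2r.
  - by move=> x _; exact: cst_continuous.
  - exact: is_cvg_cst.
  - exact: is_cvg_cst.
  - exact: is_derive_LRcontinuous dF.
  - exact/continuous_subspaceT/continuous_gauss_fun.
rewrite /F subrr mulr0 -integral0y_gauss.
apply: ge0_subset_integral => //=.
- by apply/measurable_EFinP; apply: measurable_funTS; exact: measurable_gauss_fun.
- by move=> x _; rewrite lee_fin gauss_fun_ge0.
- by move=> x; rewrite /= !in_itv /= => /andP[-> _].
Qed.

Lemma integral_expR_1Dcos_le (t : R) : 0 < t ->
  (\int[mu]_(x in `[(- pi)%R, pi]) (expR (- (2 * t)^-1 * (1 + cos x)))%:E
    <= (pi * Num.sqrt pi * Num.sqrt t)%:E)%E.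
Proof.
move=> t_gt0; have pi_gt0 := @pi_gt0 R.
pose k := (pi * Num.sqrt t)^-1.
have k_gt0 : 0 < k by rewrite invr_gt0 mulr_gt0 ?sqrtr_gt0.
pose g (x : R) := gauss_fun (k * (x - - pi)).
have cg : continuous g.
  move=> x; apply: continuous_comp; last exact: continuous_gauss_fun.
  by eapply is_derive_continuous; derive_tac.
have cgN : continuous (g \o -%R).
  by move=> x; apply: continuous_comp; [exact: continuousN | exact: cg].
have g_ge0 x : 0 <= g x by exact: gauss_fun_ge0.
have integrand_le_gauss u : 0 <= u <= pi -> expR (- (2 * t)^-1 * (1 + cos u)) <= g (- u).
  move=> u_bnd; rewrite /g /gauss_fun ler_expR mulNr lerN2.
  have -> : (k * (- u - - pi)) ^+ 2 = (2 * t)^-1 * (2 * (pi - u) ^+ 2 / pi ^+ 2).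
    rewrite /k exprMn exprVn exprMn sqr_sqrtr ?(ltW t_gt0) //.
    move: (lt0r_neq0 pi_gt0) (lt0r_neq0 t_gt0); move: (@pi R) => p p_neq0 t_neq0.
    by field; rewrite p_neq0 t_neq0.
  by rewrite ler_wpM2l ?jordan_1Dcos // invr_ge0 mulr_ge0 // ltW.
apply: (@le_trans _ _ (\int[mu]_(x in `[(- pi)%R, pi]) ((g (- x))%:E + (g x)%:E))%E).
  apply: ge0_le_integral_nm => x; first by rewrite lee_fin expR_ge0.
  rewrite /= in_itv /= => /andP[x_ge x_le]; rewrite -EFinD lee_fin.
  have [x_ge0|x_lt0] := lerP 0 x.
    by apply: le_trans (integrand_le_gauss x _) _; [rewrite x_ge0 | rewrite lerDl].
  rewrite -[x]opprK cosN; apply: le_trans (integrand_le_gauss (- x) _) _; first by apply/andP; split; lra.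
  by rewrite lerDr.
have mg := continuous_measurable_EFin `[(- pi)%R, pi] _ cg.
have mgN := continuous_measurable_EFin `[(- pi)%R, pi] _ cgN.
rewrite ge0_integralD //; try by move=> x _; rewrite lee_fin.
have -> : (\int[mu]_(x in `[(- pi)%R, pi]) (g (- x))%:E
    = \int[mu]_(x in `[(- pi)%R, pi]) (g x)%:E)%E.
  have := integration_by_substitution_oppr (ltW (gtrN pi_gt0)) (continuous_subspaceT cg).
  by rewrite opprK => <-.
apply: (@le_trans _ _ ((Num.sqrt pi / 2 / k)%:E + (Num.sqrt pi / 2 / k)%:E)%E).
  by apply: leeD; apply: integral_gauss_shift_le => //; exact: ltW (gtrN pi_gt0).
by rewrite -EFinD lee_fin /k invrK (_ : _ + _ = pi * Num.sqrt pi * Num.sqrt t) //; field.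
Qed.

End integrals_on_itv.

Section iter_cube_int.
Context {R : realType}.
Local Open Scope ereal_scope.

Lemma iter_cube_int_ge0 n (f : n.-tuple R -> \bar R) :
  (forall t, 0 <= f t) -> 0 <= iter_cube_int f.
Proof.
elim: n f => [|n IH] f f_ge0 /=; first exact: f_ge0.
by apply: integral_ge0 => x _; apply: IH.
Qed.

Lemma le_iter_cube_int n (f g : n.-tuple R -> \bar R) :
  (forall t, 0 <= f t) -> (forall t, f t <= g t) -> iter_cube_int f <= iter_cube_int g.
Proof.
elim: n f g => [|n IH] f g f_ge0 fg /=; first exact: fg.
apply: ge0_le_integral_nm => x _; first exact: iter_cube_int_ge0.
exact: IH.
Qed.

Lemma iter_cube_int_prod_le n (g : R -> R) (G c : R) :
  (forall x, 0 <= g x)%R -> measurable_fun `[(- pi)%R, pi] g ->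
  \int[lebesgue_measure]_(x in `[(- pi)%R, pi]) (g x)%:E <= G%:E -> (0 <= c)%R ->
  iter_cube_int (fun t : n.-tuple R => (c * \prod_(j < n) g (tnth t j))%:E)
    <= (c * G ^+ n)%:E.
Proof.
move=> g_ge0 mg intg_le; elim: n c => [|n IH] c c_ge0 /=; first by rewrite big_ord0 expr0.
have G_ge0 : (0 <= G)%R.
  by rewrite -lee_fin (le_trans _ intg_le) // integral_ge0 // => x _; rewrite lee_fin.
have cGn_ge0 : 0 <= (c * G ^+ n)%:E by rewrite lee_fin mulr_ge0 ?exprn_ge0.
apply: (@le_trans _ _ (\int[lebesgue_measure]_(x in `[(- pi)%R, pi]) ((c * G ^+ n)%:E * (g x)%:E))).
  apply: ge0_le_integral_nm => x _.
    by apply: iter_cube_int_ge0 => t; rewrite lee_fin mulr_ge0 ?prodr_ge0.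
  under eq_fun do rewrite big_ord_recl /= tnth0 mulrCA.
  under eq_fun do under eq_bigr do rewrite tnthS.
  under eq_fun do rewrite mulrA.
  apply: le_trans (IH _ (mulr_ge0 (g_ge0 x) c_ge0)) _.
  by rewrite -EFinM lee_fin [leRHS]mulrC mulrA.
rewrite ge0_integralZl_EFin //; last 2 first.
- by move=> x _; rewrite lee_fin.
- exact/measurable_EFinP.
by rewrite exprSr mulrA [leRHS]EFinM; exact: lee_wpmul2l.
Qed.

End iter_cube_int.

Section chernoff.
Context {R : realType}.
Variables (N : nat) (t : R).
Hypothesis N_gt0 : (0 < N)%N.
Local Notation A := [set th : N.-tuple R | order_R0 th <= t].

Lemma indic_order_R0_le (lam : R) (th : N.-tuple R) : 0 <= lam ->
  \1_A th <= expR (lam * t) ^+ N * \prod_(j < N) expR (- lam * (1 + cos (tnth th j))).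
Proof.
move=> lam_ge0; rewrite indicE; have [thA|_] := boolP (th \in A); last first.
  by rewrite mulr_ge0 ?exprn_ge0 ?expR_ge0 ?prodr_ge0 // => j _; rewrite expR_ge0.
move: thA; rewrite inE /= /order_R0 ler_pdivrMl ?ltr0n // => sum_le.
rewrite -expRM_natl -expR_sum -expRD -[X in X <= _]expR0 ler_expR -mulr_sumr.
by rewrite mulrCA mulNr -mulrBr mulr_ge0 // subr_ge0.
Qed.

Lemma cube_measure_order_R0_le (lam G : R) : 0 <= lam ->
  (\int[lebesgue_measure]_(x in `[(- pi)%R, pi]) (expR (- lam * (1 + cos x)))%:E <= G%:E)%E ->
  (cube_measure A <= ((expR (lam * t) * G / (2 * pi)) ^+ N)%:E)%E.
Proof.
move=> lam_ge0 intg_le; have pi_gt0 := @pi_gt0 R.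
have mg : measurable_fun `[(- pi)%R, pi] (fun x : R => expR (- lam * (1 + cos x))).
  apply: measurable_funTS; apply: continuous_measurable_fun => x.
  by eapply is_derive_continuous; derive_tac.
rewrite /cube_measure.
apply: (@le_trans _ _ (((2 * pi) ^- N)%:E * (expR (lam * t) ^+ N * G ^+ N)%:E)%E).
  apply: lee_wpmul2l; first by rewrite lee_fin invr_ge0 exprn_ge0 ?mulr_ge0 ?ltW.
  have := @iter_cube_int_prod_le R N _ _ _ (fun _ => expR_ge0 _) mg intg_le
    (exprn_ge0 N (expR_ge0 (lam * t))).
  apply: le_trans; apply: le_iter_cube_int => th; first by rewrite lee_fin indicE.
  by rewrite lee_fin indic_order_R0_le.
by rewrite -EFinM lee_fin -exprVn -!exprMn mulrC.
Qed.

Lemma cube_measure_order_R0_le_expR : 0 <= t <= 1 ->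
  (cube_measure A <= (expR (- (1 - t) ^+ 2 * N%:R))%:E)%E.
Proof.
move=> /andP[t_ge0 t_le1]; have pi_gt0 := @pi_gt0 R.
have s_bnd : 0 <= 1 - t <= 1 by apply/andP; split; lra.
apply: le_trans (cube_measure_order_R0_le _ _ _ (integral_expR_Dcos_le _ s_bnd)) _.
  by rewrite mulr_ge0 // subr_ge0.
rewrite lee_fin expRM_natr mulrCA [X in X / _]mulrC mulfK ?mulf_neq0 ?gt_eqF //.
by rewrite -expRD (_ : _ + _ = - (1 - t) ^+ 2) //; ring.
Qed.

Lemma cube_measure_order_R0_le_sqrt : 0 < t ->
  (cube_measure A <= ((Num.sqrt (pi * expR 1 * t) / 2) ^+ N)%:E)%E.
Proof.
move=> t_gt0; have pi_gt0 := @pi_gt0 R.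
apply: le_trans (cube_measure_order_R0_le _ _ _ (integral_expR_1Dcos_le _ t_gt0)) _.
  by rewrite invr_ge0 mulr_ge0 // ltW.
have sqrt_e : Num.sqrt (expR 1) = expR (2^-1) :> R.
  rewrite (_ : expR 1 = expR (2^-1) ^+ 2); last by rewrite -expRM_natl mulfV.
  by rewrite sqrtr_sqr ger0_norm ?expR_ge0.
rewrite !sqrtrM ?mulr_ge0 ?expR_ge0 ?(ltW pi_gt0) // sqrt_e.
rewrite (_ : (2 * t)^-1 * t = 2^-1); last by field; rewrite gt_eqF.
move: (lt0r_neq0 pi_gt0); move: (@pi R) => p p_neq0.
by rewrite lee_fin (_ : _ * _ / _ = Num.sqrt p * expR 2^-1 * Num.sqrt t / 2) //; field.
Qed.

End chernoff.

Theorem lemma5p4 (R : realType) (N : nat) (hN : (0 < N)%N) (t : R)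
  (ht0 : 0 < t) (ht1 : t < 1) :
  (cube_measure [set th : N.-tuple R | (order_R0 th <= t)%R]
   <= (Num.min (expR (- (1 - t) ^+ 2 * N%:R))
               ((Num.sqrt (pi * expR 1 * t) / 2) ^+ N))%:E)%E.
Proof.
rewrite EFin_min le_min; apply/andP; split.
- by apply: cube_measure_order_R0_le_expR => //; rewrite !ltW.
- exact: cube_measure_order_R0_le_sqrt.
Qed.
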